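(* Let $V$ be a finite set, $C=(C_R)_{R\subseteq V}$ non-negative capacities and $D=(D_S)_{S\subseteq V}$ non-negative demands. Then \[ \mathrm{MinHypCut}(V,C,D)=\min_{\delta\in\Delta_1(V)}\frac{C\cdot\delta}{D\cdot\delta}, \] where $\Delta_1(V)$ is the set of all $\ell_1$-embeddable diversities on $V$.
   Context: A diversity on $V$ is a function $\delta$ from subsets of $V$ to $\mathbb{R}$ with $\delta(A)\ge 0$, $\delta(A)=0$ whenever $|A|\le 1$ (values $0$ on larger sets are allowed), and $\delta(A\cup B)+\delta(B\cup C)\ge\delta(A\cup C)$ whenever $B\neq\emptyset$. Write $C\cdot\delta=\sum_{R\subseteq V}C_R\delta(R)$ and $D\cdot\delta=\sum_{S\subseteq V}D_S\delta(S)$; quotients are considered only where the denominator is nonzero. The $\ell_1^m$ diversity is $(\mathbb{R}^m,\delta_1)$ with $\delta_1(A)=\sum_{i=1}^m\max\{|a_i-b_i|:a,b\in A\}$; a diversity $\delta$ on $V$ is $\ell_1$-embeddable if there are $m$ and $\phi:V\to\mathbb{R}^m$ with $\delta(A)=\delta_1(\phi(A))$ for all $A\subseteq V$. For $U\subseteq V$ let $\partial U$ be the set of subsets of $V$ meeting both $U$ and $V\setminus U$, and $\mathrm{MinHypCut}(V,C,D)=\min_{U\subseteq V}\frac{\sum_{A\in\partial U}C_A}{\sum_{S\in\partial U}D_S}$. *)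

From HB Require Import structures.
From mathcomp Require Import all_boot all_order all_algebra.
From mathcomp Require Import reals.
Set Implicit Arguments. Unset Strict Implicit. Unset Printing Implicit Defensive.
Import Order.TTheory GRing.Theory Num.Theory.
Local Open Scope ring_scope.

Section Defs.
Variables (R : realType) (V : finType).

Definition is_diversity (delta : {set V} -> R) : Prop :=
  [/\ forall A : {set V}, 0 <= delta A,
      forall A : {set V}, (#|A| <= 1)%N -> delta A = 0 &
      forall A B C : {set V}, B != set0 -> delta (A :|: C) <= delta (A :|: B) + delta (B :|: C)].

(* The l1^m diversity of the image phi(A) of A under phi : V -> R^m:
   sum_i max_{a,b in A} |phi a i - phi b i| (0 for empty A). *)
Definition l1_div_image (m : nat) (phi : V -> 'I_m -> R) (A : {set V}) : R :=
  \sum_(i < m) \big[Num.max/0]_(a in A) \big[Num.max/0]_(b in A) `|phi a i - phi b i|.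

Definition l1_embeddable (delta : {set V} -> R) : Prop :=
  exists (m : nat) (phi : V -> 'I_m -> R), forall A : {set V}, delta A = l1_div_image phi A.

Definition dotp (C delta : {set V} -> R) : R := \sum_(S : {set V}) C S * delta S.

Definition in_boundary (U A : {set V}) : bool :=
  (A :&: U != set0) && (A :\: U != set0).

Definition cut_cap (C : {set V} -> R) (U : {set V}) : R :=
  \sum_(A : {set V} | in_boundary U A) C A.

Definition cut_ratio_value (C D : {set V} -> R) (r : R) : Prop :=
  exists U : {set V}, cut_cap D U != 0 /\ r = cut_cap C U / cut_cap D U.

Definition l1_ratio_value (C D : {set V} -> R) (r : R) : Prop :=
  exists delta : {set V} -> R,
    [/\ is_diversity delta, l1_embeddable delta, dotp D delta != 0 &
        r = dotp C delta / dotp D delta].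

End Defs.

Definition is_min (R : realType) (P : R -> Prop) (m : R) : Prop :=
  P m /\ forall r, P r -> m <= r.

Definition is_MinHypCut (R : realType) (V : finType) (C D : {set V} -> R) (m : R) :=
  is_min (cut_ratio_value C D) m.

From HB Require Import structures.
From mathcomp Require Import all_boot all_order all_algebra.
From mathcomp Require Import reals.
From mathcomp Require Import lra.
Import Order.TTheory GRing.Theory Num.Theory.
Local Open Scope ring_scope.
Set Implicit Arguments. Unset Strict Implicit. Unset Printing Implicit Defensive.

(* Every cut diversity [cut_div U] is an l1-embeddable diversity with [C . cut_div U]
   equal to the cut capacity, so the minimum over Delta_1 is at most MinHypCut.
   Conversely an l1 diversity is a sum of its coordinate diversities
   [line_div f A = max_A f - min_A f], and each of these is a nonnegative combination
   of cut diversities: truncating f at its largest non-maximal value t splits off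
   (max f - t) times the cut of the non-maximal points.  Hence any inequality
   [c * D . cut <= C . cut] valid for all cuts transfers to all of Delta_1. *)

Section CutDecomposition.
Variables (R : realType) (V : finType).

Definition line_div (f : V -> R) (A : {set V}) : R :=
  \big[Num.max/0]_(a in A) \big[Num.max/0]_(b in A) `|f a - f b|.

Definition cut_div (U A : {set V}) : R := (in_boundary U A)%:R.

Lemma line_div_extremal f (A : {set V}) amax amin :
  amax \in A -> amin \in A -> (forall x, x \in A -> f amin <= f x <= f amax) ->
  line_div f A = f amax - f amin.
Proof.
move=> Amax Amin Hf.
have span_ge0 : 0 <= f amax - f amin by rewrite subr_ge0; case/andP: (Hf _ Amax).
apply/eqP; rewrite eq_le; apply/andP; split.
  apply: bigmax_le => // a Aa; apply: bigmax_le => // b Ab.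
  case/andP: (Hf _ Aa) => ? ?; case/andP: (Hf _ Ab) => ? ?.
  rewrite ler_norml; apply/andP; split; lra.
apply: (bigmax_sup amax) => //; apply: (bigmax_sup amin) => //.
by rewrite ger0_norm.
Qed.

Lemma line_div_const f (A : {set V}) :
  {in A &, forall a b, f a = f b} -> line_div f A = 0.
Proof.
move=> Hf; apply: (big_ind (eq^~ 0)) => // [x y -> -> | a Aa]; first by rewrite maxxx.
apply: (big_ind (eq^~ 0)) => // [x y -> -> | b Ab]; first by rewrite maxxx.
by rewrite (Hf a b Aa Ab) subrr normr0.
Qed.

Lemma cut_capE (X : {set V} -> R) U : cut_cap X U = dotp X (cut_div U).
Proof.
rewrite /cut_cap /dotp big_mkcond; apply: eq_bigr => A _ /=.
by rewrite /cut_div; case: (in_boundary U A); rewrite ?mulr1 ?mulr0.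
Qed.

Lemma dotpDZ (X d e : {set V} -> R) w :
  dotp X (fun A => d A + w * e A) = dotp X d + w * dotp X e.
Proof.
rewrite /dotp mulr_sumr -big_split; apply: eq_bigr => A _ /=.
by rewrite mulrDr mulrCA.
Qed.

Lemma dotp_ge0 (X d : {set V} -> R) :
  (forall S, 0 <= X S) -> (forall S, 0 <= d S) -> 0 <= dotp X d.
Proof. by move=> X0 d0; apply: sumr_ge0 => S _; apply: mulr_ge0. Qed.

Lemma line_div_truncate f (N : {set V}) t M (A : {set V}) :
  (forall x, x \in N -> f x <= t) -> (forall x, x \notin N -> f x = M) -> t < M ->
  line_div f A = line_div (fun x => Num.min (f x) t) A + (M - t) * cut_div N A.
Proof.
move=> fN fNc tM.
have [-> | [a Aa]] := set_0Vmem A.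
  by rewrite /line_div !big_set0 /cut_div /in_boundary set0I eqxx mulr0 addr0.
have [amax Amax Hmax] := arg_maxP f Aa; have [amin Amin Hmin] := arg_minP f Aa.
have {}Amax : amax \in A := Amax; have {}Amin : amin \in A := Amin.
have Hf x : x \in A -> f amin <= f x <= f amax.
  by move=> Ax; apply/andP; split; [exact: Hmin | exact: Hmax].
rewrite (line_div_extremal Amax Amin Hf) (line_div_extremal Amax Amin); last first.
  by move=> x /Hf /andP [? ?]; rewrite !le_min2.
rewrite /cut_div /in_boundary.
case: (boolP (amax \in N)) => Nmax; case: (boolP (amin \in N)) => Nmin.
- have -> : A :\: N == set0.
    apply/eqP/setP => x; rewrite in_set0 in_setD; apply/negP => /andP [xN xA].
    have := fNc _ xN; have := Hf _ xA; have := fN _ Nmax; lra.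
  by rewrite andbF mulr0 addr0 !min_l ?fN.
- have := fNc _ Nmin; have := fN _ Nmax; have := Hf _ Amax; lra.
- have -> : A :&: N != set0 by apply/set0Pn; exists amin; rewrite in_setI Amin Nmin.
  have -> : A :\: N != set0 by apply/set0Pn; exists amax; rewrite in_setD Amax Nmax.
  rewrite /= mulr1 (fNc _ Nmax) (min_r (ltW tM)) min_l ?fN //; lra.
- have -> : A :&: N == set0.
    apply/eqP/setP => x; rewrite in_set0 in_setI; apply/negP => /andP [xA xN].
    have := fNc _ Nmin; have := Hf _ xA; have := fN _ xN; lra.
  rewrite /= mulr0 addr0 !min_r ?fNc //; lra.
Qed.

Definition nonmax (f : V -> R) : {set V} := [set x | [exists y, f x < f y]].

Lemma nonmax_truncate_proper f x1 :
  x1 \in nonmax f -> nonmax (fun x => Num.min (f x) (f x1)) \proper nonmax f.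
Proof.
move=> Nx1; apply/properP; split.
  apply/subsetP => x; rewrite !inE => /existsP [y]; apply: contraLR.
  by move=> /existsPn/(_ y); rewrite -leNgt => /le_min2/(_ (lexx (f x1))); rewrite leNgt.
exists x1 => //; rewrite inE; apply/existsP => -[y].
by rewrite (min_r (lexx _)) lt_min ltxx andbF.
Qed.

Lemma nonmax0_const f : nonmax f = set0 -> forall a b, f a = f b.
Proof.
have le_all a b : nonmax f = set0 -> f a <= f b.
  move=> N0; case: leP => // lt_ba; suff : b \in nonmax f by rewrite N0 inE.
  by rewrite inE; apply/existsP; exists a.
by move=> N0 a b; apply/eqP; rewrite eq_le !le_all.
Qed.

Variables (X Y : {set V} -> R) (c : R).
Hypothesis cut_bound : forall U, c * cut_cap Y U <= cut_cap X U.

Lemma cut_bound_line_div f : c * dotp Y (line_div f) <= dotp X (line_div f).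
Proof.
have [n] := ubnP #|nonmax f|; elim: n f => [//|n IH] f ltNn.
have [N0 | [x0 Nx0]] := set_0Vmem (nonmax f).
  have dotp_const W : dotp W (line_div f) = 0.
    by rewrite /dotp big1 // => A _; rewrite line_div_const ?mulr0 // => a b _ _;
      exact: nonmax0_const.
  by rewrite !dotp_const mulr0.
have [x1 Nx1 Hx1] := arg_maxP f Nx0; have {}Nx1 : x1 \in nonmax f := Nx1.
have [z _ Hz] := arg_maxP f (isT : predT x0).
have fN x : x \in nonmax f -> f x <= f x1 by exact: Hx1.
have fNc x : x \notin nonmax f -> f x = f z.
  move=> xN; apply/eqP; rewrite eq_le (Hz x isT : f x <= f z) /=; case: leP => // lt_xz.
  by case/negP: xN; rewrite inE; apply/existsP; exists z.
have lt_x1z : f x1 < f z.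
  by move: (Nx1); rewrite inE => /existsP [y /lt_le_trans]; apply; exact: Hz.
have decomp W : dotp W (line_div f) =
    dotp W (line_div (fun x => Num.min (f x) (f x1)))
    + (f z - f x1) * cut_cap W (nonmax f).
  rewrite cut_capE -dotpDZ; apply: eq_bigr => A _.
  by rewrite (line_div_truncate A fN fNc lt_x1z).
have lt_trunc := leq_trans (proper_card (nonmax_truncate_proper Nx1)) ltNn.
have := IH (fun x => Num.min (f x) (f x1)) lt_trunc.
rewrite !decomp; have := cut_bound (nonmax f); have : 0 <= f z - f x1 by lra.
nra.
Qed.

Lemma cut_bound_l1 delta : l1_embeddable delta -> c * dotp Y delta <= dotp X delta.
Proof.
move=> [m [phi delta_phi]].
have dotp_coord W : dotp W delta = \sum_(i < m) dotp W (line_div (fun x => phi x i)).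
  rewrite /dotp (eq_bigr (fun S => \sum_(i < m) W S * line_div (fun x => phi x i) S)).
    by rewrite exchange_big.
  by move=> S _; rewrite delta_phi mulr_sumr.
rewrite !dotp_coord mulr_sumr; apply: ler_sum => i _; exact: cut_bound_line_div.
Qed.

End CutDecomposition.

Section CutDiversities.
Variables (R : realType) (V : finType).

Lemma in_boundary_card2 (U A : {set V}) : in_boundary U A -> (1 < #|A|)%N.
Proof.
case/andP=> /set0Pn [x /setIP [xA xU]] /set0Pn [y /setDP [yA yU]].
have xy : x != y by apply: contraNneq yU => <-.
have sub : [set x; y] \subset A by apply/subsetP => w /set2P [] ->.
by have := subset_leq_card sub; rewrite cards2 xy.
Qed.

Lemma in_boundary_triangle (U A B C : {set V}) : B != set0 ->
  in_boundary U (A :|: C) -> in_boundary U (A :|: B) || in_boundary U (B :|: C).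
Proof.
move=> /set0Pn [b bB] /andP [/set0Pn [u /setIP [uAC uU]] /set0Pn [v /setDP [vAC vU]]].
have meet (W : {set V}) w : w \in W -> w \in U -> W :&: U != set0.
  by move=> wW wU; apply/set0Pn; exists w; rewrite in_setI wW wU.
have leave (W : {set V}) w : w \in W -> w \notin U -> W :\: U != set0.
  by move=> wW wU; apply/set0Pn; exists w; rewrite in_setD wW wU.
rewrite /in_boundary.
move: uAC vAC; rewrite !in_setU => /orP [uA | uC] /orP [vA | vC].
- by rewrite (meet _ u) ?in_setU ?uA // (leave _ v) ?in_setU ?vA.
- case: (boolP (b \in U)) => bU.
  + by rewrite orbC (meet _ b) ?in_setU ?bB // (leave _ v) ?in_setU ?vC ?orbT.
  + by rewrite (meet _ u) ?in_setU ?uA // (leave _ b) ?in_setU ?bB ?orbT.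
- case: (boolP (b \in U)) => bU.
  + by rewrite (meet _ b) ?in_setU ?bB ?orbT // (leave _ v) ?in_setU ?vA.
  + by rewrite orbC (meet _ u) ?in_setU ?uC ?orbT // (leave _ b) ?in_setU ?bB.
- by rewrite orbC (meet _ u) ?in_setU ?uC ?orbT // (leave _ v) ?in_setU ?vC ?orbT.
Qed.

Lemma cut_div_diversity (U : {set V}) : is_diversity (@cut_div R V U).
Proof.
split=> [A | A card_A | A B C B0]; rewrite /cut_div.
- exact: ler0n.
- by case: (boolP (in_boundary U A)) => // /in_boundary_card2; rewrite ltnNge card_A.
- have := @in_boundary_triangle U A B C B0.
  case: (in_boundary U (A :|: C)); case: (in_boundary U (A :|: B));
    case: (in_boundary U (B :|: C)) => tri; rewrite ?(mulr1n, mulr0n); lra.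
Qed.

Lemma cut_div_l1_embeddable (U : {set V}) : l1_embeddable (@cut_div R V U).
Proof.
exists 1%N, (fun x _ => (x \in U)%:R) => A; rewrite /l1_div_image big_ord1.
rewrite -/(line_div (fun x => (x \in U)%:R) A) /cut_div /in_boundary.
have [/set0Pn [x /setIP [xA xU]] | /negPn/eqP AU0] /= := boolP (A :&: U != set0).
  have [/set0Pn [y /setDP [yA yU]] | /negPn/eqP AU1] /= := boolP (A :\: U != set0).
    rewrite (line_div_extremal xA yA) ?xU ?(negbTE yU) ?subr0 //.
    by move=> w _; case: (w \in U); rewrite ?ler01 ?lexx.
  rewrite line_div_const // => a b aA bA.
  have inU w : w \in A -> w \in U.
    by move=> wA; apply: contraT => wU; rewrite -(in_set0 w) -AU1 in_setD wU.
  by rewrite !inU.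
rewrite line_div_const // => a b aA bA.
have notU w : w \in A -> (w \in U) = false.
  move=> wA; apply: negbTE; apply: contraT => /negPn wU.
  by rewrite -(in_set0 w) -AU0 in_setI wA.
by rewrite !notU.
Qed.

End CutDiversities.

Section MinHypCut.
Variables (R : realType) (V : finType) (C D : {set V} -> R).
Hypotheses (C_ge0 : forall S, 0 <= C S) (D_ge0 : forall S, 0 <= D S).

Lemma is_min_unique (P : R -> Prop) m m' : is_min P m -> is_min P m' -> m = m'.
Proof.
by move=> [Pm min_m] [Pm' min_m']; apply/eqP; rewrite eq_le min_m // min_m'.
Qed.

Lemma cut_ratio_l1_ratio r : cut_ratio_value C D r -> l1_ratio_value C D r.
Proof.
move=> [U [DU0 ->]]; exists (@cut_div R V U).
by split; rewrite -?cut_capE //; [exact: cut_div_diversity | exact: cut_div_l1_embeddable].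
Qed.

Lemma cut_lower_bound_l1_ratio m :
  (forall r, cut_ratio_value C D r -> m <= r) ->
  forall r, l1_ratio_value C D r -> m <= r.
Proof.
move=> min_m r [delta [[delta_ge0 _ _] emb DdeltaN0 ->]].
have cut_bound U : m * cut_cap D U <= cut_cap C U.
  have DU_ge0 : 0 <= cut_cap D U by apply: sumr_ge0.
  have [-> | DU0] := eqVneq (cut_cap D U) 0; first by rewrite mulr0 sumr_ge0.
  by rewrite -ler_pdivlMr ?lt_def ?DU0 //; apply: min_m; exists U.
rewrite ler_pdivlMr ?lt_def ?DdeltaN0 ?dotp_ge0 //; exact: cut_bound_l1.
Qed.

(* If all cuts have zero demand, the cut bound with [c = 1] and zero capacities
   gives [D . delta <= 0]. *)
Lemma l1_ratio_cut_cap_neq0 r :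
  l1_ratio_value C D r -> exists U, cut_cap D U != 0.
Proof.
move=> [delta [[delta_ge0 _ _] emb DdeltaN0 _]].
apply/existsP; apply: contraNT DdeltaN0 => /existsPn all0.
have cut_bound U : 1 * cut_cap D U <= cut_cap (fun _ => 0) U.
  by move: (all0 U); rewrite negbK => /eqP ->; rewrite mulr0 /cut_cap big1.
have dotp0 : dotp (fun _ => 0) delta = 0 by rewrite /dotp big1 // => S _; rewrite mul0r.
have := cut_bound_l1 cut_bound emb; rewrite mul1r dotp0 => Dle0.
by rewrite eq_le Dle0 dotp_ge0.
Qed.

Lemma is_MinHypCut_exists U0 : cut_cap D U0 != 0 -> exists m, is_MinHypCut C D m.
Proof.
move=> DU0; have [U1 DU1 minU1] :=
  arg_minP (P := fun U => cut_cap D U != 0) (fun U => cut_cap C U / cut_cap D U) DU0.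
exists (cut_cap C U1 / cut_cap D U1); split; first by exists U1.
by move=> r [U [DU ->]]; exact: minU1.
Qed.

Lemma is_MinHypCut_l1_min m : is_MinHypCut C D m -> is_min (l1_ratio_value C D) m.
Proof.
move=> [cut_m min_m]; split; first exact: cut_ratio_l1_ratio.
exact: cut_lower_bound_l1_ratio.
Qed.

End MinHypCut.

Theorem proposition17 (R : realType) (V : finType) (C D : {set V} -> R)
  (hC : forall S : {set V}, 0 <= C S) (hD : forall S : {set V}, 0 <= D S) :
  forall m : R, is_MinHypCut C D m <-> is_min (l1_ratio_value C D) m.
Proof.
move=> m; split; first exact: is_MinHypCut_l1_min.
move=> l1_min; have [U0 DU0] := l1_ratio_cut_cap_neq0 hD l1_min.1.
have [m' cut_min] := is_MinHypCut_exists C DU0.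
by rewrite (is_min_unique l1_min (is_MinHypCut_l1_min hC hD cut_min)).
Qed.
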